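(* Assume the Standing setting below and let $x\in\Lambda$. Then: - if $\mu_+\lambda_+\eta^{-1}<1$, then $\omega(x)(v_t,v_s)=0$ for all $v_t\in T_x\Lambda$, $v_s\in E^s_x$; - if $\mu_-\lambda_-\eta<1$, then $\omega(x)(v_t,v_u)=0$ for all $v_t\in T_x\Lambda$, $v_u\in E^u_x$; - if $\lambda_+^2\eta^{-1}<1$, then $\omega(x)(v^1_s,v^2_s)=0$ for all $v^1_s,v^2_s\in E^s_x$; - if $\lambda_-^2\eta<1$, then $\omega(x)(v^1_u,v^2_u)=0$ for all $v^1_u,v^2_u\in E^u_x$.
   Context: Standing setting. A map, form or vector field is called $\mathcal C^r$ if it and its derivatives up to order $r$ are continuous and uniformly bounded; $r$ is a sufficiently large integer. $(M,\omega)$ is an orientable, connected, non-compact $d$-dimensional Riemannian manifold whose metric is $\mathcal C^r$ with uniformly bounded derivatives, and $\omega$ is a symplectic form (a closed non-degenerate 2-form). (U1): there is $\rho_0>0$ such that for every $x\in M$ the ball $B_{\rho_0}(x)$ carries a $\mathcal C^r$ coordinate chart onto the unit ball of $\mathbb R^d$, the charts and their inverses having uniformly bounded $\mathcal C^r$ norms. $f:M\to M$ is a diffeomorphism which is conformally symplectic: $f^*\omega=\eta\,\omega$ for a constant $\eta>0$. $\Lambda\subset M$ is an unbounded, boundaryless, connected, $f$-invariant submanifold which is a normally hyperbolic invariant manifold (NHIM): there is a $Df$-invariant splitting $T_xM=T_x\Lambda\oplus E^s_x\oplus E^u_x$ for $x\in\Lambda$, rates $0<\lambda_\pm<1$, $\mu_\pm\ge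 1$ with $\lambda_+\mu_-<1$, $\lambda_-\mu_+<1$, and constants $C_\pm,D_\pm>0$ such that for all $x\in\Lambda$: $v\in T_x\Lambda$ iff $\|Df^n(x)v\|\le D_+\mu_+^n\|v\|$ for all $n\ge 0$ and $\|Df^n(x)v\|\le D_-\mu_-^{|n|}\|v\|$ for all $n\le 0$; $v\in E^s_x$ iff $\|Df^n(x)v\|\le C_+\lambda_+^n\|v\|$ for all $n\ge0$; $v\in E^u_x$ iff $\|Df^n(x)v\|\le C_-\lambda_-^{|n|}\|v\|$ for all $n\le 0$. (U2): for some $\rho>0$ there is a $\mathcal C^r$ diffeomorphism with $\mathcal C^r$ inverse from a uniform neighborhood of the zero section of $E^s\oplus E^u$ onto $\mathcal O_\rho=\{y\in M: d(y,\Lambda)<\rho\}$. (U3): $f\in\mathcal C^r(\mathcal O_\rho)$, $f^{-1}\in\mathcal C^r(f(\mathcal O_\rho))$. Under these assumptions $\Lambda$ has local stable and unstable manifolds $W^{s,\rm loc}_\Lambda$, $W^{u,\rm loc}_\Lambda$ (points near $\Lambda$ whose forward, resp. backward, orbits stay near $\Lambda$; tangent at $\Lambda$ to $T\Lambda\oplus E^s$, resp. $T\Lambda\oplus E^u$), which are disjoint unions $W^{s,\rm loc}_\Lambda=\bigcup_{x\in\Lambda}W^{s,\rm loc}_x$, $W^{u,\rm loc}_\Lambda=\bigcup_{x\in\Lambda}W^{u,\rm loc}_x$ of strong stable/unstable fibers: $W^{s,\rm loc}_x$ is the set of nearby $y$ with $d(f^n(y),f^n(x))\le C\lambda_+^n$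 for all $n\ge0$ (a manifold tangent to $E^s_x$ at $x$), and analogously $W^{u,\rm loc}_x$ with $n\le 0$ and $\lambda_-$. It is assumed: (H1) $\Lambda$ is $\mathcal C^1$; (H2) $W^{s,\rm loc}_\Lambda$, $W^{u,\rm loc}_\Lambda$ are $\mathcal C^1$; (H3) the fibers $W^{s,\rm loc}_x$, $W^{u,\rm loc}_x$ are $\mathcal C^1$ uniformly in $x$; (H4) the foliations of $W^{s,\rm loc}_\Lambda$, $W^{u,\rm loc}_\Lambda$ by these fibers are of class $\mathcal C^{1,1}$ (leaves uniformly $\mathcal C^1$, depending $\mathcal C^1$ on the base point in the $\mathcal C^1$ topology). The wave maps $\Omega_+:W^{s,\rm loc}_\Lambda\to\Lambda$, $\Omega_-:W^{u,\rm loc}_\Lambda\to\Lambda$ send $y$ to the unique $x\in\Lambda$ with $y\in W^{s,\rm loc}_x$ (resp. $y\in W^{u,\rm loc}_x$); they satisfy $\Omega_\pm\circ f^n=f^n\circ\Omega_\pm$, which extends them to the global manifolds $W^s_\Lambda=\bigcup_{n\ge0}f^{-n}(W^{s,\rm loc}_\Lambda)$, $W^u_\Lambda=\bigcup_{n\ge0}f^{n}(W^{u,\rm loc}_\Lambda)$ (with global fibers $W^s_x$, $W^u_x$ defined analogously). A homoclinic channel is a submanifold $\Gamma\subset W^s_\Lambda\cap W^u_\Lambda$ (contained in finitely many iterates of the local manifolds) such that for all $x\in\Gamma$: $T_xM=T_xW^s_\Lambda+T_xW^u_\Lambda$, $T_xW^s_\Lambda\cap T_xW^u_\Lambda=T_x\Gamma$,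 $T_x\Gamma\oplus T_xW^s_{\Omega_+(x)}=T_xW^s_\Lambda$, $T_x\Gamma\oplus T_xW^u_{\Omega_-(x)}=T_xW^u_\Lambda$, and $\Omega_-|_\Gamma$ is a $\mathcal C^1$ diffeomorphism onto its image. Writing $\Omega^\Gamma_\pm=\Omega_\pm|_\Gamma$ (both $\mathcal C^1$ diffeomorphisms onto their images $H_\pm\subset\Lambda$), the scattering map is $S=\Omega_+^\Gamma\circ(\Omega_-^\Gamma)^{-1}:H_-\to H_+$. (U4): $f\in\mathcal C^r(\mathcal O)$ and $f^{-1}\in\mathcal C^r(f(\mathcal O))$, where $\mathcal O$ is the union of $\mathcal O_\rho$ with uniform neighborhoods of $W^{s,\rm loc}_\Lambda$ and $W^{u,\rm loc}_\Lambda$ (including the finitely many iterates containing $\Gamma$). (U5): $\sup_{x\in\mathcal O}\|\omega(x)\|<\infty$. For a submanifold $N$, $\omega|_N$ denotes the restriction of $\omega$ to $TN\times TN$. *)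

From mathcomp Require Import all_boot all_order all_algebra.
From mathcomp Require Import reals.
Set Implicit Arguments. Unset Strict Implicit. Unset Printing Implicit Defensive.
Import Order.TTheory GRing.Theory Num.Theory.
Local Open Scope ring_scope.

(* Pointwise linear-algebra model of the standing setting.
   Each tangent space T_yM is identified with row vectors 'rV[R]_d; a
   tangent vector v at y is pushed forward by Df(y) as v *m Df y. *)

Definition bform (R : realType) (d : nat) (A : 'M[R]_d) (u v : 'rV[R]_d) : R :=
  (u *m A *m v^T) 0 0.

Definition rnorm (R : realType) (d : nat) (G : 'M[R]_d) (v : 'rV[R]_d) : R :=
  Num.sqrt (bform G v v).

Fixpoint Dfpow (M : Type) (R : realType) (d : nat) (f : M -> M)
  (Df : M -> 'M[R]_d) (y : M) (n : nat) : 'M[R]_d :=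
  match n with
  | 0 => 1%:M
  | n'.+1 => Df y *m Dfpow f Df (f y) n'
  end.

(* Df^{-n}(y) = D(f^{-n})(y) = (Df^n(f^{-n} y))^{-1} : T_y M -> T_{f^{-n} y} M *)
Definition Dfneg (M : Type) (R : realType) (d : nat) (f finv : M -> M)
  (Df : M -> 'M[R]_d) (y : M) (n : nat) : 'M[R]_d :=
  invmx (Dfpow f Df (iter n finv y) n).

Definition standing_setting (M : Type) (R : realType) (d : nat)
  (g : M -> 'M[R]_d)
  (omega : M -> 'M[R]_d)
  (f finv : M -> M)
  (Df : M -> 'M[R]_d)
  (eta : R)
  (Lambda : M -> Prop)
  (TL Es Eu : M -> 'M[R]_d)    (* row spaces: T_x Lambda, E^s_x, E^u_x *)
  (lamp lamm mup mum Cp Cm Dp Dm : R)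
  (O : M -> Prop)
  : Prop :=
  [/\
   (forall y, (g y)^T = g y /\ forall v : 'rV[R]_d, v != 0 -> 0 < bform (g y) v v),
   (forall y, (omega y)^T = - omega y /\ omega y \in unitmx),
   (forall y, finv (f y) = y /\ f (finv y) = y) /\ (forall y, Df y \in unitmx),
   0 < eta /\ (forall y (u v : 'rV[R]_d),
      bform (omega (f y)) (u *m Df y) (v *m Df y) = eta * bform (omega y) u v) &
   (forall y, Lambda y <-> Lambda (f y))
  ] /\ [/\
   [/\ 0 < lamp < 1, 0 < lamm < 1, 1 <= mup & 1 <= mum] /\
     (lamp * mum < 1 /\ lamm * mup < 1) /\
     [/\ 0 < Cp, 0 < Cm, 0 < Dp & 0 < Dm],
   (forall y, Lambda y ->
      [/\ (TL y + Es y + Eu y :=: 1%:M)%MS,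
          (\rank (TL y) + \rank (Es y) + \rank (Eu y) = d)%N,
          (TL y *m Df y :=: TL (f y))%MS,
          (Es y *m Df y :=: Es (f y))%MS &
          (Eu y *m Df y :=: Eu (f y))%MS]),
   (forall y, Lambda y -> forall v : 'rV[R]_d,
      [/\ (v <= TL y)%MS <->
            ((forall n : nat, rnorm (g (iter n f y)) (v *m Dfpow f Df y n)
                              <= Dp * mup ^+ n * rnorm (g y) v) /\
             (forall n : nat, rnorm (g (iter n finv y)) (v *m Dfneg f finv Df y n)
                              <= Dm * mum ^+ n * rnorm (g y) v)),
          (v <= Es y)%MS <->
            (forall n : nat, rnorm (g (iter n f y)) (v *m Dfpow f Df y n)
                              <= Cp * lamp ^+ n * rnorm (g y) v) &
          (v <= Eu y)%MS <->
            (forall n : nat, rnorm (g (iter n finv y)) (v *m Dfneg f finv Df y n)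
                              <= Cm * lamm ^+ n * rnorm (g y) v)]) &
   (forall y, Lambda y -> O y) /\
   (exists K : R, forall y, O y -> forall u v : 'rV[R]_d,
      `|bform (omega y) u v| <= K * rnorm (g y) u * rnorm (g y) v)
  ].

From mathcomp Require Import all_boot all_order all_algebra.
From mathcomp Require Import reals.
From mathcomp Require Import ring lra.
Import Order.TTheory GRing.Theory Num.Theory.
Set Implicit Arguments. Unset Strict Implicit. Unset Printing Implicit Defensive.
Local Open Scope ring_scope.

(* Conformal symplecticity gives omega(f^n x)(Df^n u, Df^n v) = eta^n omega(x)(u, v),
   while the left-hand side is at most K |Df^n u| |Df^n v| because omega is bounded
   near Lambda.  Feeding in the growth rates of the two subbundles, |omega(x)(u, v)|
   is dominated by a geometric sequence of ratio (rate_u * rate_v / eta), hence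
   vanishes when that ratio is below 1.  Bundles controlled in backward time are
   treated the same way with f^{-1}, which multiplies omega by eta^{-1}. *)

Section GeometricDecay.
Variable R : realType.

Lemma expr_Bernoulli_le1 (q : R) n : 0 <= q -> q < 1 ->
  q ^+ n * (1 + n%:R * (1 - q)) <= 1.
Proof.
move=> q_ge0 q_lt1; elim: n => [|n IHn]; first by rewrite expr0 mul0r addr0 mul1r.
have qSn_ge0 : 0 <= q ^+ n.+1 by apply: exprn_ge0.
have qSn_le1 : q ^+ n.+1 <= 1 by rewrite exprn_ile1 // ltW.
have -> : q ^+ n.+1 * (1 + n.+1%:R * (1 - q)) =
    q * (q ^+ n * (1 + n%:R * (1 - q))) + q ^+ n.+1 * (1 - q).
  by rewrite exprS -natr1; ring.
have : q * (q ^+ n * (1 + n%:R * (1 - q))) <= q by rewrite ler_piMr.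
nra.
Qed.

Lemma eq0_of_geometric_bound (a C q : R) : 0 <= q -> q < 1 ->
  (forall n, `|a| <= C * q ^+ n) -> a = 0.
Proof.
move=> q_ge0 q_lt1 bound_a; apply/eqP; apply/negPn/negP => a_neq0.
have a_gt0 : 0 < `|a| by rewrite normr_gt0.
have C_gt0 : 0 < C by have := bound_a 0%N; rewrite expr0 mulr1; lra.
pose m := Num.bound (C / ((1 - q) * `|a|)).
have m_large : C < m%:R * ((1 - q) * `|a|).
  by rewrite -ltr_pdivrMr ?mulr_gt0 ?subr_gt0 // archi_boundP // divr_ge0 ?ltW
     ?mulr_gt0 ?subr_gt0.
have weight_ge0 : 0 <= 1 + m%:R * (1 - q) by rewrite addr_ge0 ?mulr_ge0 ?subr_ge0 ?ltW.
have : `|a| * (1 + m%:R * (1 - q)) <= C.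
  apply: (le_trans (y := C * (q ^+ m * (1 + m%:R * (1 - q))))).
    by rewrite mulrA ler_wpM2r.
  by apply: ler_piMr; [exact: ltW | exact: expr_Bernoulli_le1].
lra.
Qed.

Lemma eq0_of_rates (c s K Cx Cy al be : R) (x y : nat -> R) :
  0 < s -> 0 <= al -> 0 <= be -> al * be / s < 1 ->
  (forall n, `|s ^+ n * c| <= K * x n * y n) ->
  (forall n, 0 <= x n <= Cx * al ^+ n) -> (forall n, 0 <= y n <= Cy * be ^+ n) ->
  c = 0.
Proof.
move=> s_gt0 al_ge0 be_ge0 ratio_lt1 bound_c rate_x rate_y.
apply: (@eq0_of_geometric_bound c (`|K| * Cx * Cy) (al * be / s)) => //.
  by apply: divr_ge0; [apply: mulr_ge0 | apply: ltW].
move=> n; have sn_gt0 : 0 < s ^+ n by apply: exprn_gt0.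
have /andP[xn_ge0 xn_le] := rate_x n; have /andP[yn_ge0 yn_le] := rate_y n.
have Kxy : K * x n * y n <= `|K| * Cx * Cy * (al ^+ n * be ^+ n).
  have -> : `|K| * Cx * Cy * (al ^+ n * be ^+ n) =
      `|K| * ((Cx * al ^+ n) * (Cy * be ^+ n)) by ring.
  apply: (le_trans (y := `|K| * (x n * y n))).
    by rewrite mulrA; do 2 apply: ler_wpM2r => //; exact: ler_norm.
  by apply: ler_wpM2l => //; apply: ler_pM.
rewrite expr_div_n exprMn mulrA ler_pdivlMr // mulrC.
have := bound_c n; rewrite normrM gtr0_norm // => bound_cn.
exact: le_trans bound_cn Kxy.
Qed.

End GeometricDecay.

Lemma iter_cancel (T : Type) (f finv : T -> T) : cancel finv f ->
  forall n y, iter n f (iter n finv y) = y.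
Proof. by move=> finvK; elim=> [|n IHn] y //=; rewrite -iterS iterSr finvK IHn. Qed.

Lemma rnorm_ge0 (R : realType) (d : nat) (G : 'M[R]_d) (v : 'rV[R]_d) : 0 <= rnorm G v.
Proof. exact: sqrtr_ge0. Qed.

Section ConformalForm.
Variables (M : Type) (R : realType) (d : nat) (omega Df : M -> 'M[R]_d)
  (f finv : M -> M) (eta : R).
Hypothesis conformal : forall y (u v : 'rV[R]_d),
  bform (omega (f y)) (u *m Df y) (v *m Df y) = eta * bform (omega y) u v.

Lemma bform_Dfpow n y u v :
  bform (omega (iter n f y)) (u *m Dfpow f Df y n) (v *m Dfpow f Df y n)
  = eta ^+ n * bform (omega y) u v.
Proof.
elim: n y u v => [|n IHn] y u v /=; first by rewrite !mulmx1 expr0 mul1r.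
by rewrite -iterS iterSr !mulmxA IHn conformal exprSr mulrA.
Qed.

Hypothesis Df_unit : forall y, Df y \in unitmx.

Lemma Dfpow_unit n y : Dfpow f Df y n \in unitmx.
Proof.
by elim: n y => [|n IHn] y /=; rewrite ?unitmx1 // unitmx_mul Df_unit IHn.
Qed.

Hypothesis finvK : cancel finv f.

Lemma bform_Dfneg n y u v :
  bform (omega y) u v = eta ^+ n *
    bform (omega (iter n finv y)) (u *m Dfneg f finv Df y n) (v *m Dfneg f finv Df y n).
Proof. by rewrite -bform_Dfpow iter_cancel // /Dfneg !mulmxKV // Dfpow_unit. Qed.

End ConformalForm.

Section StandingSetting.
Variables (M : Type) (R : realType) (d : nat)
  (g omega : M -> 'M[R]_d) (f finv : M -> M) (Df : M -> 'M[R]_d) (eta : R)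
  (Lambda : M -> Prop) (TL Es Eu : M -> 'M[R]_d)
  (lamp lamm mup mum Cp Cm Dp Dm : R) (O : M -> Prop).
Hypothesis setting : standing_setting g omega f finv Df eta Lambda TL Es Eu
  lamp lamm mup mum Cp Cm Dp Dm O.

Lemma eta_gt0 : 0 < eta.
Proof. by case: setting => -[_ _ _ []]. Qed.

Lemma conformal y (u v : 'rV[R]_d) :
  bform (omega (f y)) (u *m Df y) (v *m Df y) = eta * bform (omega y) u v.
Proof. by case: setting => -[_ _ _ [_ ->]]. Qed.

Lemma Df_unit y : Df y \in unitmx.
Proof. by case: setting => -[_ _ [_ ->]]. Qed.

Lemma finvK : cancel finv f.
Proof. by case: setting => -[_ _ [finv_f _] _ _] _ y; case: (finv_f y). Qed.

Lemma Lambda_iter_f x n : Lambda x -> Lambda (iter n f x).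
Proof.
case: setting => -[_ _ _ _ Lambda_f] _.
by move=> Lx; elim: n => [|n IHn] //=; exact: (Lambda_f _).1.
Qed.

Lemma Lambda_iter_finv x n : Lambda x -> Lambda (iter n finv x).
Proof.
case: setting => -[_ _ _ _ Lambda_f] _.
by move=> Lx; elim: n => [|n IHn] //=; apply: (Lambda_f _).2; rewrite finvK.
Qed.

Lemma omega_bounded_on_Lambda : exists K, forall y, Lambda y ->
  forall u v, `|bform (omega y) u v| <= K * rnorm (g y) u * rnorm (g y) v.
Proof.
case: setting => _ [_ _ _ [Lambda_O [K bounded]]].
by exists K => y Ly; apply/bounded/Lambda_O.
Qed.

Lemma rates_ge0 : [/\ 0 <= lamp, 0 <= lamm, 0 <= mup & 0 <= mum].
Proof.
case: setting => _ [[[/andP[lamp_gt0 _] /andP[lamm_gt0 _] mup_ge1 mum_ge1] _] _ _ _].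
split; [exact: ltW | exact: ltW | exact: le_trans mup_ge1 | exact: le_trans mum_ge1].
Qed.

Lemma TL_growth x v : Lambda x -> (v <= TL x)%MS ->
  (forall n, rnorm (g (iter n f x)) (v *m Dfpow f Df x n) <= Dp * mup ^+ n * rnorm (g x) v) /\
  (forall n, rnorm (g (iter n finv x)) (v *m Dfneg f finv Df x n)
               <= Dm * mum ^+ n * rnorm (g x) v).
Proof. by case: setting => _ [_ _ growth _] Lx; case: (growth x Lx v) => -[]. Qed.

Lemma Es_growth x v : Lambda x -> (v <= Es x)%MS ->
  forall n, rnorm (g (iter n f x)) (v *m Dfpow f Df x n) <= Cp * lamp ^+ n * rnorm (g x) v.
Proof. by case: setting => _ [_ _ growth _] Lx; case: (growth x Lx v) => _ []. Qed.

Lemma Eu_growth x v : Lambda x -> (v <= Eu x)%MS ->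
  forall n, rnorm (g (iter n finv x)) (v *m Dfneg f finv Df x n)
              <= Cm * lamm ^+ n * rnorm (g x) v.
Proof. by case: setting => _ [_ _ growth _] Lx; case: (growth x Lx v) => _ _ []. Qed.

Lemma bform_eq0_forward x u v (al be Cu Cv : R) :
  Lambda x -> 0 <= al -> 0 <= be -> al * be / eta < 1 ->
  (forall n, rnorm (g (iter n f x)) (u *m Dfpow f Df x n) <= Cu * al ^+ n * rnorm (g x) u) ->
  (forall n, rnorm (g (iter n f x)) (v *m Dfpow f Df x n) <= Cv * be ^+ n * rnorm (g x) v) ->
  bform (omega x) u v = 0.
Proof.
move=> Lx al_ge0 be_ge0 ratio_lt1 rate_u rate_v.
have [K bounded] := omega_bounded_on_Lambda.
apply: (@eq0_of_rates _ _ eta K (Cu * rnorm (g x) u) (Cv * rnorm (g x) v) al be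
  (fun n => rnorm (g (iter n f x)) (u *m Dfpow f Df x n))
  (fun n => rnorm (g (iter n f x)) (v *m Dfpow f Df x n))) => // [|n|n|n].
- exact: eta_gt0.
- by rewrite -(bform_Dfpow conformal); apply/bounded/Lambda_iter_f.
- by rewrite rnorm_ge0 mulrAC rate_u.
- by rewrite rnorm_ge0 mulrAC rate_v.
Qed.

Lemma bform_eq0_backward x u v (al be Cu Cv : R) :
  Lambda x -> 0 <= al -> 0 <= be -> al * be * eta < 1 ->
  (forall n, rnorm (g (iter n finv x)) (u *m Dfneg f finv Df x n)
               <= Cu * al ^+ n * rnorm (g x) u) ->
  (forall n, rnorm (g (iter n finv x)) (v *m Dfneg f finv Df x n)
               <= Cv * be ^+ n * rnorm (g x) v) ->
  bform (omega x) u v = 0.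
Proof.
move=> Lx al_ge0 be_ge0 ratio_lt1 rate_u rate_v.
have [K bounded] := omega_bounded_on_Lambda.
have eta_neq0 : eta != 0 by rewrite gt_eqF // eta_gt0.
apply: (@eq0_of_rates _ _ eta^-1 K (Cu * rnorm (g x) u) (Cv * rnorm (g x) v) al be
  (fun n => rnorm (g (iter n finv x)) (u *m Dfneg f finv Df x n))
  (fun n => rnorm (g (iter n finv x)) (v *m Dfneg f finv Df x n))) => // [||n|n|n].
- by rewrite invr_gt0 eta_gt0.
- by rewrite invrK.
- rewrite (bform_Dfneg conformal Df_unit finvK n) mulrA -exprMn mulVf // expr1n mul1r.
  by apply/bounded/Lambda_iter_finv.
- by rewrite rnorm_ge0 mulrAC rate_u.
- by rewrite rnorm_ge0 mulrAC rate_v.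
Qed.

End StandingSetting.

Theorem lemma6p4 (M : Type) (R : realType) (d : nat)
  (g omega : M -> 'M[R]_d) (f finv : M -> M) (Df : M -> 'M[R]_d) (eta : R)
  (Lambda : M -> Prop) (TL Es Eu : M -> 'M[R]_d)
  (lamp lamm mup mum Cp Cm Dp Dm : R) (O : M -> Prop) :
  standing_setting g omega f finv Df eta Lambda TL Es Eu
    lamp lamm mup mum Cp Cm Dp Dm O ->
  forall x : M, Lambda x ->
  [/\ (mup * lamp / eta < 1 ->
         forall vt vs : 'rV[R]_d, (vt <= TL x)%MS -> (vs <= Es x)%MS ->
           bform (omega x) vt vs = 0),
      (mum * lamm * eta < 1 ->
         forall vt vu : 'rV[R]_d, (vt <= TL x)%MS -> (vu <= Eu x)%MS ->
           bform (omega x) vt vu = 0),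
      (lamp ^+ 2 / eta < 1 ->
         forall v1 v2 : 'rV[R]_d, (v1 <= Es x)%MS -> (v2 <= Es x)%MS ->
           bform (omega x) v1 v2 = 0) &
      (lamm ^+ 2 * eta < 1 ->
         forall v1 v2 : 'rV[R]_d, (v1 <= Eu x)%MS -> (v2 <= Eu x)%MS ->
           bform (omega x) v1 v2 = 0)].
Proof.
move=> setting x Lx; have [lamp_ge0 lamm_ge0 mup_ge0 mum_ge0] := rates_ge0 setting.
split=> [rate vt vs /(TL_growth setting Lx) [rate_t _] /(Es_growth setting Lx) rate_s
        |rate vt vu /(TL_growth setting Lx) [_ rate_t] /(Eu_growth setting Lx) rate_u
        |rate v1 v2 /(Es_growth setting Lx) rate1 /(Es_growth setting Lx) rate2
        |rate v1 v2 /(Eu_growth setting Lx) rate1 /(Eu_growth setting Lx) rate2].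
- exact: (bform_eq0_forward setting Lx mup_ge0 lamp_ge0 rate rate_t rate_s).
- exact: (bform_eq0_backward setting Lx mum_ge0 lamm_ge0 rate rate_t rate_u).
- rewrite expr2 in rate.
  exact: (bform_eq0_forward setting Lx lamp_ge0 lamp_ge0 rate rate1 rate2).
- rewrite expr2 in rate.
  exact: (bform_eq0_backward setting Lx lamm_ge0 lamm_ge0 rate rate1 rate2).
Qed.
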